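(* Let $\mathcal{C}$ be a hypergraph on $V$ and $F$ an edge of $\mathcal{C}$. (i) If $\operatorname{conn_h}(\operatorname{Ind}(\mathcal{C}-F))>\operatorname{conn_h}(\operatorname{Ind}(\mathcal{C}))$, then $\operatorname{conn_h}(\operatorname{Ind}(\mathcal{C}:F))\ge \operatorname{conn_h}(\operatorname{Ind}(\mathcal{C}))-|F|+1$. (ii) If $\operatorname{conn_h}(\operatorname{Ind}(\mathcal{C}:F))\ge \operatorname{conn_h}(\operatorname{Ind}(\mathcal{C}))-|F|+1$, then $\operatorname{conn_h}(\operatorname{Ind}(\mathcal{C}-F))\ge \operatorname{conn_h}(\operatorname{Ind}(\mathcal{C}))$.
   Context: A hypergraph $\mathcal{C}$ on a finite vertex set $V$ is a family of pairwise incomparable subsets of $V$ (its edges), each of cardinality at least $2$. The independence complex $\operatorname{Ind}(\mathcal{C})$ is the simplicial complex on $V$ whose faces are the subsets of $V$ containing no edge of $\mathcal{C}$ (if $V=\emptyset$ it is $\{\emptyset\}$). For an edge $F$: $\mathcal{C}-F$ is the hypergraph on $V$ with edge set $\mathcal{C}\setminus\{F\}$; $N_{\mathcal{C}}(F)=\bigcup\{E\setminus F : E\in\mathcal{C},\ |E\setminus F|=1\}$; and $\mathcal{C}:F$ is the hypergraph on $V\setminus(F\cup N_{\mathcal{C}}(F))$ whose edges are the members of cardinality at least $2$ among the inclusion-minimal members of the family $\{E\setminus F : E\in \mathcal{C}-F\}$. The homological connectivity $\operatorname{conn_h}(\Delta)$ is the largest integer $k$ such that $\tilde H_i(\Delta;\mathbb{Z})=0$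 for all $i\le k$ ($\infty$ if all vanish; $\operatorname{conn_h}(\{\emptyset\})=-2$). *)

From HB Require Import structures.
From mathcomp Require Import all_boot all_order all_algebra.
From Stdlib Require Import ClassicalEpsilon.
Import Order.TTheory GRing.Theory Num.Theory.

Set Implicit Arguments.
Unset Strict Implicit.
Unset Printing Implicit Defensive.

(* The (reduced = augmented) chain complex: an (n-1)-chain is an
   integer function on sets, supported on faces of cardinality n (n = 0 gives
   the augmentation degree -1, spanned by the empty face).  Simplices are
   oriented by the fixed linear order of T given by enum_rank.  *)

Definition ord_lt (T : finType) (u v : T) : bool := (enum_rank u < enum_rank v)%N.

(* sign of the face s in the boundary of v |: s  (v \notin s):
   (-1)^(position of v in the ordered simplex v |: s) *)
Definition bsign (T : finType) (s : {set T}) (v : T) : int :=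
  ((-1) ^+ #|[set u in s | ord_lt u v]|)%R.

Definition bd (T : finType) (c : {set T} -> int) : {set T} -> int :=
  fun s => (\sum_(v in ~: s) bsign s v * c (v |: s))%R.

Definition is_chain (T : finType) (D : {set {set T}}) (n : nat)
    (c : {set T} -> int) : Prop :=
  forall s, c s != 0%R -> s \in D /\ #|s| = n.

(* the reduced homology group in degree n-1 vanishes: every cycle is a
   boundary *)
Definition hvan_nat (T : finType) (D : {set {set T}}) (n : nat) : Prop :=
  forall c, is_chain D n c -> (forall s, bd c s = 0%R) ->
    exists d, is_chain D n.+1 d /\ (forall s, bd d s = c s).

(* \tilde H_i(D; Z) = 0  (automatically true for i <= -2) *)
Definition hvanish (T : finType) (D : {set {set T}}) (i : int) : Prop :=
  forall n : nat, (n%:Z = i + 1)%R -> hvan_nat D n.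

(* homological connectivity, valued in int extended by +oo (= None) *)
Definition conn_h (T : finType) (D : {set {set T}}) : option int :=
  match excluded_middle_informative (forall i, hvanish D i) with
  | left _ => None
  | right _ => Some (epsilon (inhabits 0%R)
       (fun k : int => (forall i, (i <= k)%R -> hvanish D i) /\
                       ~ hvanish D (k + 1)%R))
  end.

Definition ele (a b : option int) : Prop :=
  match a, b with
  | _, None => True
  | None, Some _ => False
  | Some x, Some y => (x <= y)%R
  end.
Definition elt (a b : option int) : Prop :=
  match a, b with
  | None, _ => False
  | Some _, None => True
  | Some x, Some y => (x < y)%R
  end.
Definition eshift (k : int) (a : option int) : option int :=
  omap (fun x => (x + k)%R) a.

Definition hypergraph (T : finType) (V : {set T}) (C : {set {set T}}) : Prop :=
  (forall E, E \in C -> E \subset V /\ (2 <= #|E|)%N) /\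
  (forall E E', E \in C -> E' \in C -> E \subset E' -> E = E').

Definition Ind (T : finType) (C : {set {set T}}) (V : {set T}) : {set {set T}} :=
  [set s : {set T} | (s \subset V) && [forall E in C, ~~ (E \subset s)]].

Definition nbhd (T : finType) (C : {set {set T}}) (F : {set T}) : {set T} :=
  \bigcup_(E in C | #|E :\: F| == 1%N) (E :\: F).

Definition link_ground (T : finType) (V : {set T}) (C : {set {set T}})
    (F : {set T}) : {set T} := V :\: (F :|: nbhd C F).
Definition link_edges (T : finType) (C : {set {set T}}) (F : {set T})
    : {set {set T}} :=
  let S := [set E :\: F | E in C :\ F] in
  [set G in S | [forall H in S, (H \subset G) ==> (H == G)] && (2 <= #|G|)%N].

(* The faces of Ind(C - F) that are not faces of Ind(C) are exactly the sets
   F :|: t with t a face of Ind(C : F) disjoint from F.  Hence the relative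
   chain complex of the pair (Ind(C - F), Ind(C)) is, up to signs, the chain
   complex of Ind(C : F) shifted by |F|, and both statements are the
   exactness of the long exact sequence
     H_i(Ind C) -> H_i(Ind(C - F)) -> H_(i-|F|)(Ind(C : F)) -> H_(i-1)(Ind C)
   at its two middle terms, which is checked by chasing explicit chains. *)

From mathcomp Require Import all_boot all_order all_algebra.
From mathcomp Require Import ring zify.
From Stdlib Require Import Classical ClassicalEpsilon.
Import Order.TTheory GRing.Theory Num.Theory.
Set Implicit Arguments.
Unset Strict Implicit.
Unset Printing Implicit Defensive.
Local Open Scope ring_scope.

Section Boundary.
Variable T : finType.
Implicit Types (s t : {set T}) (c e : {set T} -> int) (D : {set {set T}}).

Lemma ord_lt_xor (v w : T) : v != w -> (ord_lt v w + ord_lt w v = 1)%N.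
Proof.
move=> vw; rewrite /ord_lt.
have : enum_rank v != enum_rank w by apply: contra vw => /eqP/enum_rank_inj ->.
by case: ltngtP => // /val_inj ->; rewrite eqxx.
Qed.

Lemma bsignU1 s v w : v \notin s ->
  bsign (v |: s) w = bsign s w * (-1) ^+ ord_lt v w.
Proof.
move=> vs; rewrite /bsign.
have -> : [set u in v |: s | ord_lt u w] =
   if ord_lt v w then v |: [set u in s | ord_lt u w] else [set u in s | ord_lt u w].
  apply/setP => u; case: (boolP (ord_lt v w)) => h; rewrite !inE.
    by case: (eqVneq u v) => [->|] /=; rewrite ?h.
  by case: (eqVneq u v) => [->|] /=; rewrite ?(negPf h) ?(negPf vs).
case: (boolP (ord_lt v w)) => h; last by rewrite ?(negPf h) /= expr0 mulr1.
by rewrite ?h cardsU1 inE (negPf vs) /= addnC exprD.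
Qed.

(* bd (bd c) s is a double sum over pairs v, w of points outside s whose
   summand is antisymmetric in (v, w). *)
Lemma bd_bd c s : bd (bd c) s = 0.
Proof.
pose G v w := if (v \notin s) && (w \notin s) && (v != w) then
   bsign s v * bsign (v |: s) w * c (w |: (v |: s)) else 0.
have bdbdE : bd (bd c) s = \sum_v \sum_w G v w.
  rewrite /bd big_mkcond; apply: eq_bigr => v _; rewrite inE.
  case: (boolP (v \in s)) => vs /=.
    by rewrite big1 // => w _; rewrite /G vs.
  rewrite mulr_sumr big_mkcond; apply: eq_bigr => w _.
  rewrite /G vs !inE /= [v == w]eq_sym mulrA.
  by case: (w == v); case: (w \in s).
have G_antisym x y : G y x = - G x y.
  rewrite /G [(y == x)]eq_sym [(y \notin s) && _]andbC.
  case: (boolP ((x \notin s) && (y \notin s) && (x != y)));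
    last by rewrite oppr0.
  case/andP=> /andP[xs ys] xy.
  rewrite !bsignU1 // [y |: (x |: s)]setUCA.
  have := ord_lt_xor xy.
  by case: (ord_lt x y); case: (ord_lt y x) => //= _; rewrite ?expr1 ?expr0; ring.
have : \sum_v \sum_w G v w = - \sum_v \sum_w G v w.
  rewrite [LHS]exchange_big /= -sumrN; apply: eq_bigr => v _; rewrite -sumrN.
  by apply: eq_bigr => w _; rewrite G_antisym.
rewrite -bdbdE => /eqP; rewrite -subr_eq0 opprK -mulr2n mulrn_eq0 /= => /eqP //.
Qed.

Lemma eq_bd c e s : (forall x, c x = e x) -> bd c s = bd e s.
Proof. by move=> ce; rewrite /bd; apply: eq_bigr => v _; rewrite ce. Qed.

Lemma bdD c e s : bd (fun x => c x + e x) s = bd c s + bd e s.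
Proof. by rewrite /bd -big_split; apply: eq_bigr => v _; rewrite mulrDr. Qed.

Lemma bdB c e s : bd (fun x => c x - e x) s = bd c s - bd e s.
Proof. by rewrite /bd -sumrB; apply: eq_bigr => v _; rewrite mulrBr. Qed.

Lemma bd_neq0 c s : bd c s != 0 -> exists2 v, v \notin s & c (v |: s) != 0.
Proof.
move=> h; apply/exists_inP; apply: contraR h => /exists_inPn h.
rewrite /bd big1 // => v; rewrite inE => vs.
by have := h v vs; rewrite negbK => /eqP ->; rewrite mulr0.
Qed.

Lemma cardsU_disjoint (A B : {set T}) : B \subset ~: A -> #|A :|: B| = (#|A| + #|B|)%N.
Proof.
by rewrite -disjoints_subset disjoint_sym => dAB; apply/eqP; rewrite (leq_card_setU A B).
Qed.

Definition down_closed D := forall s s', s \subset s' -> s' \in D -> s \in D.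

Lemma bd_chain D n c : down_closed D -> is_chain D n.+1 c -> is_chain D n (bd c).
Proof.
move=> dD hc s /bd_neq0 [v vs /hc [h1 h2]]; split.
  exact: dD (subsetUr _ _) h1.
by move: h2; rewrite cardsU1 vs => -[].
Qed.

Lemma chainD D n c e :
  is_chain D n c -> is_chain D n e -> is_chain D n (fun x => c x + e x).
Proof.
move=> hc he s h; case: (eqVneq (c s) 0) => [c0|/hc //].
by apply: he; move: h; rewrite c0 add0r.
Qed.

Lemma chainB D n c e :
  is_chain D n c -> is_chain D n e -> is_chain D n (fun x => c x - e x).
Proof.
move=> hc he s h; case: (eqVneq (c s) 0) => [c0|/hc //].
by apply: he; move: h; rewrite c0 sub0r oppr_eq0.
Qed.

Lemma sub_chain D D' n c : {subset D <= D'} -> is_chain D n c -> is_chain D' n c.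
Proof. by move=> sD hc s /hc [/sD]. Qed.

End Boundary.

Section Join.
Variables (T : finType) (F : {set T}).
Implicit Types (s t : {set T}) (c u : {set T} -> int).

Lemma setUDK s : F \subset s -> F :|: s :\: F = s.
Proof. by move=> Fs; rewrite -{2}(setID s F) (setIidPr Fs). Qed.

Lemma setUKD t : t \subset ~: F -> (F :|: t) :\: F = t.
Proof.
by rewrite -disjoints_subset => dtF; rewrite setDUl setDv set0U; apply/setDidPl.
Qed.

(* The sign of the join with F: [bsign (F :|: t) v] differs from [bsign t v]
   by the number of points of F before v, and [join_sign] absorbs this, so
   that [link_chain] commutes with the boundary. *)
Definition nbefore (v : T) : nat := #|[set u in F | ord_lt u v]|.
Definition join_sign t : int := (-1) ^+ (\sum_(v in t) nbefore v).

Definition link_chain c t : int :=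
  if t \subset ~: F then join_sign t * c (F :|: t) else 0.
Definition star_chain u s : int :=
  if F \subset s then join_sign (s :\: F) * u (s :\: F) else 0.

Lemma join_sign_sqr t : join_sign t * join_sign t = 1.
Proof. by rewrite -expr2 sqrr_sign. Qed.

Lemma join_signU1 t v : v \notin t ->
  join_sign (v |: t) = (-1) ^+ nbefore v * join_sign t.
Proof. by move=> vt; rewrite /join_sign big_setU1 //= exprD. Qed.

Lemma bsign_join t v : t \subset ~: F ->
  bsign (F :|: t) v = (-1) ^+ nbefore v * bsign t v.
Proof.
move=> tF; rewrite /bsign /nbefore -exprD.
have -> : [set u in F :|: t | ord_lt u v] =
   [set u in F | ord_lt u v] :|: [set u in t | ord_lt u v].
  by apply/setP => u; rewrite !inE andb_orl.
rewrite cardsU_disjoint //; apply/subsetP => u; rewrite !inE => /andP[ut _].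
by apply/andP => -[uF _]; move: (subsetP tF u ut); rewrite inE uF.
Qed.

Lemma link_chain_bd c t : link_chain (bd c) t = bd (link_chain c) t.
Proof.
rewrite /link_chain /bd; case: (boolP (t \subset ~: F)) => tF; last first.
  by rewrite big1 // => v _; rewrite subUset (negPf tF) andbF mulr0.
rewrite mulr_sumr (big_mkcond (fun v => v \in ~: (F :|: t))).
rewrite (big_mkcond (fun v => v \in ~: t)).
apply: eq_bigr => v _; rewrite !inE subUset sub1set !inE tF andbT.
case: (boolP (v \in t)) => vt; first by rewrite orbT.
case: (boolP (v \in F)) => vF /=; first by rewrite mulr0.
rewrite bsign_join // join_signU1 // setUCA; ring.
Qed.

Lemma link_chainB c e t :
  link_chain (fun x => c x - e x) t = link_chain c t - link_chain e t.
Proof. by rewrite /link_chain; case: ifP; rewrite ?subr0 // mulrBr. Qed.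

Lemma star_chainK c s : F \subset s -> star_chain (link_chain c) s = c s.
Proof.
by move=> Fs; rewrite /star_chain /link_chain Fs subsetDr mulrA join_sign_sqr mul1r setUDK.
Qed.

Lemma link_chainK u t :
  (u t != 0 -> t \subset ~: F) -> link_chain (star_chain u) t = u t.
Proof.
move=> h; rewrite /link_chain /star_chain.
case: (boolP (t \subset ~: F)) => tF; last first.
  by apply/esym/eqP; apply: contraR tF => /h.
by rewrite setUKD // subsetUl mulrA join_sign_sqr mul1r.
Qed.

Lemma bd_star_chain u s :
  (forall x, u x != 0 -> x \subset ~: F) -> F \subset s ->
  bd (star_chain u) s = star_chain (bd u) s.
Proof.
move=> hu Fs; rewrite -(star_chainK _ Fs) /star_chain Fs link_chain_bd.
congr (_ * _); apply: eq_bd => x; rewrite /link_chain; case: ifP => xF.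
  by rewrite -(link_chainK (hu x)) /link_chain xF.
by case: (eqVneq (u x) 0) => [-> //|/hu]; rewrite xF.
Qed.

End Join.

Section Deletion.
Variables (T : finType) (V : {set T}) (C : {set {set T}}) (F : {set T}).
Implicit Types (s t : {set T}) (c e u : {set T} -> int).

Local Notation IndC := (Ind C V).
Local Notation IndCdel := (Ind (C :\ F) V).
Local Notation IndClink := (Ind (link_edges C F) (link_ground V C F)).

Lemma Ind_down_closed (D : {set {set T}}) (W : {set T}) : down_closed (Ind D W).
Proof.
move=> s s' ss'; rewrite !inE => /andP[s'W /forall_inP h]; apply/andP; split.
  exact: subset_trans s'W.
by apply/forall_inP => E EC; apply: contra (h E EC) => /subset_trans; apply.
Qed.

Lemma Ind_sub_del : {subset IndC <= IndCdel}.
Proof.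
move=> s; rewrite !inE => /andP[-> /forall_inP h] /=; apply/forall_inP => E.
by rewrite !inE => /andP[_ /h].
Qed.

Lemma Ind_of_del s : s \in IndCdel -> ~~ (F \subset s) -> s \in IndC.
Proof.
rewrite !inE => /andP[-> /forall_inP h] nFs /=; apply/forall_inP => E EC.
by case: (eqVneq E F) => [-> //|EF]; apply: h; rewrite !inE EF.
Qed.

Lemma Ind_notF s : F \in C -> s \in IndC -> ~~ (F \subset s).
Proof. by move=> FC; rewrite inE => /andP[_ /forall_inP]; apply. Qed.

Lemma join_link_Ind t : t \subset ~: F -> F :|: t \in IndCdel -> t \in IndClink.
Proof.
move=> tF; rewrite !inE => /andP[FtV /forall_inP h]; apply/andP; split.
  apply/subsetP => x xt; rewrite !inE.
  have xnF : x \notin F by move: (subsetP tF x xt); rewrite inE.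
  rewrite (negPf xnF) (subsetP FtV) ?inE ?xt ?orbT // andbT /=; apply/negP.
  move/bigcupP => -[E /andP[EC /cards1P[z Ez]] xE].
  move: (xE); rewrite Ez inE => /eqP xz; subst z.
  have EC' : E \in C :\ F.
    by rewrite !inE EC andbT; apply/eqP => EF; move: xE; rewrite EF setDv inE.
  move/negP: (h E EC'); apply; apply/subsetP => y yE; rewrite inE.
  case: (boolP (y \in F)) => //= yF.
  have : y \in E :\: F by rewrite inE yF yE.
  by rewrite Ez inE => /eqP ->.
apply/forall_inP => G; rewrite inE => /andP[/imsetP[E EC ->] _].
apply/negP => EFt; move/negP: (h E EC); apply; apply/subsetP => y yE; rewrite inE.
by case: (boolP (y \in F)) => //= yF; apply: (subsetP EFt); rewrite inE yF.
Qed.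

Hypotheses (hC : hypergraph V C) (FC : F \in C).

(* A minimal trace E :\: F contained in t is nonempty because the edges are
   incomparable, and not a singleton because t avoids the neighbourhood of F;
   so it is an edge of C : F. *)
Lemma join_del_Ind t : t \subset link_ground V C F ->
  [forall G in link_edges C F, ~~ (G \subset t)] -> F :|: t \in IndCdel.
Proof.
move=> tg noG; have [sub_V incomp] := hC.
rewrite inE subUset (sub_V F FC).1 (subset_trans tg (subsetDl _ _)) /=.
apply/forall_inP => E; rewrite !inE => /andP[EF EC]; apply/negP => EFt.
pose S := [set E :\: F | E in C :\ F].
have ES : E :\: F \in S by apply/imsetP; exists E => //; rewrite !inE EF.
have [G minG GE] := minset_exists (P := mem S) ES.
have [GS Gmin] := minsetP minG.
have Gt : G \subset t.
  apply: subset_trans GE _; apply/subsetP => y; rewrite inE => /andP[yF yE].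
  by move: (subsetP EFt y yE); rewrite inE (negPf yF).
have [E' E'C GE'] := imsetP GS; move: E'C; rewrite !inE => /andP[E'F E'C].
have G0 : G != set0.
  apply/eqP => G0; have : E' \subset F by rewrite -setD_eq0 -GE' G0.
  by move/(incomp E' F E'C FC) => /eqP; rewrite (negPf E'F).
have G1 : #|G| != 1%N.
  apply/negP => /cards1P[z Gz].
  have : z \in t by apply: (subsetP Gt); rewrite Gz inE.
  move/(subsetP tg); rewrite !inE negb_or => /andP[/andP[_ /negP zN] _]; apply: zN.
  by apply/bigcupP; exists E'; rewrite -GE' ?Gz ?cards1 ?inE ?E'C.
have G2 : (2 <= #|G|)%N by move: G0 G1; rewrite -card_gt0; case: #|G| => [|[|]].
apply: (negP (forall_inP noG G _)) => //.
rewrite inE G2 andbT; apply/andP; split; first exact: GS.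
by apply/forall_inP => H HS; apply/implyP => HG; rewrite (Gmin H HS HG).
Qed.

Lemma link_IndP t :
  reflect (t \subset ~: F /\ F :|: t \in IndCdel) (t \in IndClink).
Proof.
apply: (iffP idP) => [|[]]; last exact: join_link_Ind.
rewrite inE => /andP[tg noG]; split; last exact: join_del_Ind.
by apply/subsetP => x /(subsetP tg); rewrite !inE negb_or -andbA => /andP[].
Qed.

Lemma link_chain_is_chain m c :
  is_chain IndCdel (m + #|F|) c -> is_chain IndClink m (link_chain F c).
Proof.
move=> hc t; rewrite /link_chain; case: ifP => tF; last by rewrite eqxx.
rewrite mulf_eq0 negb_or => /andP[_ /hc [h1 h2]]; split.
  by apply/link_IndP.
by move: h2; rewrite cardsU_disjoint // addnC => /addIn.
Qed.

Lemma star_chain_is_chain m u :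
  is_chain IndClink m u -> is_chain IndCdel (m + #|F|) (star_chain F u).
Proof.
move=> hu s; rewrite /star_chain; case: ifP => Fs; last by rewrite eqxx.
rewrite mulf_eq0 negb_or => /andP[_ /hu [/link_IndP[_]]].
rewrite setUDK // => -> us; split => //.
by rewrite -{1}(setUDK Fs) cardsU_disjoint ?subsetDr // us addnC.
Qed.

Lemma link_chain_support m u :
  is_chain IndClink m u -> forall x, u x != 0 -> x \subset ~: F.
Proof. by move=> hu x /hu [/link_IndP []]. Qed.

Lemma link_chain_IndC n e : is_chain IndC n e -> forall x, link_chain F e x = 0.
Proof.
move=> he x; rewrite /link_chain; case: ifP => // _.
case: (eqVneq (e (F :|: x)) 0) => [->|/he [h _]]; first by rewrite mulr0.
by move: (Ind_notF FC h); rewrite subsetUl.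
Qed.

Lemma del_chain_IndC n c : is_chain IndCdel n c ->
  (forall s, F \subset s -> c s = 0) -> is_chain IndC n c.
Proof.
move=> hc c0 s cs; have [h1 h2] := hc s cs; split => //.
by apply: (Ind_of_del h1); apply/negP => /c0 cs0; rewrite cs0 eqxx in cs.
Qed.

(* Exactness at the middle of
   H_(n-1)(Ind C) -> H_(n-1)(Ind(C - F)) -> H_(n-1-|F|)(Ind(C : F)). *)
Lemma hvan_del n : hvan_nat IndC n ->
  (forall m, (m + #|F|)%N = n -> hvan_nat IndClink m) -> hvan_nat IndCdel n.
Proof.
move=> vanC vanL c hc cyc.
have [Fn|nF] := leqP #|F| n; last first.
  have hcC : is_chain IndC n c.
    apply: (del_chain_IndC hc) => s Fs; apply/eqP; apply: contraLR nF => /hc [_ <-].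
    by rewrite -leqNgt subset_leq_card.
  have [d [hd bdd]] := vanC c hcC cyc.
  by exists d; split => //; apply: sub_chain hd => x /Ind_sub_del.
have hm : (n - #|F| + #|F|)%N = n by rewrite subnK.
have cyct : forall x, bd (link_chain F c) x = 0.
  by move=> x; rewrite -link_chain_bd /link_chain; case: ifP => // _; rewrite cyc mulr0.
have ht : is_chain IndClink (n - #|F|) (link_chain F c).
  by apply: link_chain_is_chain; rewrite hm.
have [u [hu bdu]] := vanL _ hm _ ht cyct.
pose d := star_chain F u.
have hd : is_chain IndCdel n.+1 d.
  by have := star_chain_is_chain hu; rewrite addSn hm.
pose c' := fun s => c s - bd d s.
have hc' : is_chain IndC n c'.
  apply: del_chain_IndC => [|s Fs].
    exact: (chainB hc (bd_chain (@Ind_down_closed _ _) hd)).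
  rewrite /c' (bd_star_chain (link_chain_support hu) Fs).
  by rewrite -{1}(star_chainK c Fs) /star_chain Fs bdu subrr.
have cyc' : forall s, bd c' s = 0 by move=> s; rewrite bdB cyc bd_bd subrr.
have [e [he bde]] := vanC c' hc' cyc'.
exists (fun s => e s + d s); split.
  by apply: chainD => //; apply: sub_chain he => x /Ind_sub_del.
by move=> s; rewrite bdD bde /c' subrK.
Qed.

(* Exactness at the middle of
   H_(n-1)(Ind(C - F)) -> H_(n-1-|F|)(Ind(C : F)) -> H_(n-2)(Ind C). *)
Lemma hvan_link m : hvan_nat IndCdel (m + #|F|) -> hvan_nat IndC (m + #|F|).-1 ->
  hvan_nat IndClink m.
Proof.
move=> vanD vanC u hu cyc.
have hn : (m + #|F|)%N = (m + #|F|).-1.+1 by have := (hC.1 F FC).2; lia.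
pose c := star_chain F u.
have hc : is_chain IndCdel (m + #|F|) c by exact: star_chain_is_chain.
have hbc : is_chain IndC (m + #|F|).-1 (bd c).
  apply: del_chain_IndC => [|s Fs].
    by apply: (bd_chain (@Ind_down_closed _ _)); rewrite -hn.
  by rewrite (bd_star_chain (link_chain_support hu) Fs) /star_chain Fs cyc mulr0.
have [e [he bde]] := vanC (bd c) hbc (fun s => bd_bd c s).
rewrite -hn in he.
pose c' := fun s => c s - e s.
have hc' : is_chain IndCdel (m + #|F|) c'.
  by apply: chainB hc _; apply: sub_chain he => x /Ind_sub_del.
have cyc' : forall s, bd c' s = 0 by move=> s; rewrite bdB bde subrr.
have [d [hd bdd]] := vanD c' hc' cyc'.
exists (link_chain F d); split.
  by apply: link_chain_is_chain; rewrite addSn.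
move=> s; rewrite -link_chain_bd (_ : link_chain F (bd d) s = link_chain F c' s).
  rewrite link_chainB (link_chain_IndC he) subr0 link_chainK //.
  by move=> us; apply: (link_chain_support hu).
by rewrite /link_chain bdd.
Qed.

End Deletion.

Section Connectivity.
Variables (T : finType) (D : {set {set T}}).

Lemma conn_h_None : conn_h D = None <-> forall n, hvan_nat D n.
Proof.
rewrite /conn_h; case: excluded_middle_informative => [vanD|nvanD].
  by split=> // _ n; apply: (vanD (n%:Z - 1)); rewrite subrK.
by split=> // vanD; case: nvanD => i n _; apply: vanD.
Qed.

Lemma ex_minimal_failure (Q : nat -> Prop) n :
  ~ Q n -> exists n0, ~ Q n0 /\ forall m, (m < n0)%N -> Q m.
Proof.
elim/ltn_ind: n => n IH nQn.
case: (classic (forall m, (m < n)%N -> Q m)) => [H|H]; first by exists n.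
have [m Hm] := not_all_ex_not _ _ H; have [mn nQm] := imply_to_and _ _ Hm.
exact: IH m mn nQm.
Qed.

Lemma conn_h_Some k : conn_h D = Some k ->
  (forall n : nat, n%:Z <= k + 1 -> hvan_nat D n) /\
  (exists n : nat, n%:Z = k + 2 /\ ~ hvan_nat D n).
Proof.
rewrite /conn_h; case: excluded_middle_informative => // nvanD [<-].
set P := (fun k0 : int => _).
have : exists k0, P k0.
  have [i hi] := not_all_ex_not _ _ nvanD.
  have [n Hn] := not_all_ex_not _ _ hi; have [_ nvan] := imply_to_and _ _ Hn.
  have [n0 [nvan0 van_lt]] := ex_minimal_failure nvan.
  exists (n0%:Z - 2); split.
    by move=> i0 hi0 n1 hn1; apply: van_lt; lia.
  by move=> van; apply: nvan0; apply: van; lia.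
move=> /(epsilon_spec (inhabits 0)) [H1 H2]; split.
  move=> n hn; apply: (H1 (n%:Z - 1)); last by rewrite subrK.
  by move: hn; set e := epsilon _ _; lia.
have [n Hn] := not_all_ex_not _ _ H2; have [hn1 _] := imply_to_and _ _ Hn.
by exists n; split => //; rewrite hn1 -addrA.
Qed.

Lemma conn_h_ge x :
  ele (Some x) (conn_h D) <-> forall n : nat, n%:Z <= x + 1 -> hvan_nat D n.
Proof.
case E: (conn_h D) => [k|] /=; last by split => // _ n _; apply: (conn_h_None.1 E).
have [vanD [n [hn nvan]]] := conn_h_Some E; split=> [xk m hm | vanx].
  by apply: vanD; lia.
by rewrite leNgt; apply/negP => kx; apply: nvan; apply: vanx; lia.
Qed.

End Connectivity.

Theorem lemma3p13 (T : finType) (V : {set T}) (C : {set {set T}}) (F : {set T}) :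
  hypergraph V C -> F \in C ->
  (elt (conn_h (Ind C V)) (conn_h (Ind (C :\ F) V)) ->
     ele (eshift (1 - (#|F|)%:Z)%R (conn_h (Ind C V)))
         (conn_h (Ind (link_edges C F) (link_ground V C F))))
  /\
  (ele (eshift (1 - (#|F|)%:Z)%R (conn_h (Ind C V)))
       (conn_h (Ind (link_edges C F) (link_ground V C F))) ->
     ele (conn_h (Ind C V)) (conn_h (Ind (C :\ F) V))).
Proof.
move=> hC FC.
case EC: (conn_h (Ind C V)) => [k|] /=; last first.
  split=> // linkNone.
  have vanL : forall m, hvan_nat (Ind (link_edges C F) (link_ground V C F)) m.
    by apply: (proj1 (conn_h_None _)); move: linkNone; case: (conn_h _).
  rewrite (proj2 (conn_h_None _)) // => n.
  by apply: hvan_del => //; apply: (proj1 (conn_h_None _)).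
have vanC : forall n : nat, n%:Z <= k + 1 -> hvan_nat (Ind C V) n.
  by apply/conn_h_ge; rewrite EC /=.
split=> [ltk | /conn_h_ge vanL].
  have vanD : forall n : nat, n%:Z <= (k + 1) + 1 -> hvan_nat (Ind (C :\ F) V) n.
    by apply/conn_h_ge; move: ltk; case: (conn_h _) => //= k'; lia.
  have F2 := (hC.1 F FC).2.
  apply/conn_h_ge => m hm; apply: hvan_link => //; [apply: vanD | apply: vanC]; lia.
apply/conn_h_ge => n hn; apply: hvan_del => //; first exact: vanC.
by move=> m hm; apply: vanL; lia.
Qed.
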